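(* Let $X_1,\dots,X_n\in\mathbb{R}^d$ be mutually orthogonal ($X_i^\top X_j=0$ for $i\ne j$), $y_1,\dots,y_n\in\mathbb{R}$, $m\ge1$. For $\mathbf U=(u_1,\dots,u_m)\in\mathbb{R}^{d\times m}$ let $$\ell(\mathbf U)=\frac1{2n}\sum_{j=1}^n\Big(\frac1{\sqrt m\,d}\sum_{i=1}^m(X_j^\top u_i)^2-y_j\Big)^2,$$ and run gradient descent $\mathbf U^{(t+1)}=\mathbf U^{(t)}-\eta\nabla\ell(\mathbf U^{(t)})$ with step-size $\eta>0$, where $\mathbf U^{(t)}=(u_1^{(t)},\dots,u_m^{(t)})$. Define $$e_i^{(t)}=\frac1{\sqrt m\,d}\sum_{j=1}^m(X_i^\top u_j^{(t)})^2-y_i,\quad z_i^{(t)}=\frac{2\eta\|X_i\|^2e_i^{(t)}}{\sqrt m\,dn},\quad a_i=\frac{2\eta\|X_i\|^2y_i}{\sqrt m\,dn}.$$ Then $z_i^{(t+1)}=f_{a_i}(z_i^{(t)})$ for all $i$ and $t$, where $f_a(z)=z\big(z^2+(a-2)z+1-2a\big)$. *)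

From HB Require Import structures.
From mathcomp Require Import all_boot all_order all_algebra.
From mathcomp Require Import all_classical all_reals all_analysis.
Set Implicit Arguments. Unset Strict Implicit. Unset Printing Implicit Defensive.
Import Order.TTheory GRing.Theory Num.Theory.
Import numFieldNormedType.Exports.
Local Open Scope ring_scope.

Definition xu (R : realType) (d m : nat) (X : 'rV[R]_d) (U : 'M[R]_(d, m)) (i : 'I_m) : R :=
  \sum_(k < d) X 0 k * U k i.

Definition sqnorm (R : realType) (d : nat) (X : 'rV[R]_d) : R := \sum_(k < d) X 0 k ^+ 2.

Definition loss (R : realType) (n d m : nat) (X : 'I_n -> 'rV[R]_d) (y : 'I_n -> R)
  (U : 'M[R]_(d, m)) : R :=
  (2 * n%:R)^-1 * \sum_(j < n)
     ((Num.sqrt m%:R * d%:R)^-1 * (\sum_(i < m) xu (X j) U i ^+ 2) - y j) ^+ 2.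

Definition grad (R : realType) (d m : nat) (f : 'M[R]_(d, m) -> R) (U : 'M[R]_(d, m))
  : 'M[R]_(d, m) :=
  \matrix_(k < d, l < m) ('D_(delta_mx k l) f U).

Definition resid (R : realType) (n d m : nat) (X : 'I_n -> 'rV[R]_d) (y : 'I_n -> R)
  (U : 'M[R]_(d, m)) (i : 'I_n) : R :=
  (Num.sqrt m%:R * d%:R)^-1 * (\sum_(j < m) xu (X i) U j ^+ 2) - y i.

Definition fa (R : realType) (a z : R) : R := z * (z ^+ 2 + (a - 2) * z + 1 - 2 * a).

From HB Require Import structures.
From mathcomp Require Import all_boot all_order all_algebra.
From mathcomp Require Import all_classical all_reals all_analysis.
From mathcomp Require Import ring.
Set Implicit Arguments. Unset Strict Implicit. Unset Printing Implicit Defensive.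
Import Order.TTheory GRing.Theory Num.Theory.
Import numFieldNormedType.Exports.
Local Open Scope ring_scope.

(** The gradient of the loss with respect to u_l is a combination of the X_j
  weighted by X_j^T u_l.  By orthogonality, a gradient step therefore rescales
  each projection X_i^T u_l by the same factor 1 - z_i, so the fitted value
  e_i + y_i is multiplied by (1 - z_i)^2.  In the normalised variables this
  reads z_i' = (z_i + a_i) (1 - z_i)^2 - a_i, which is f_{a_i}(z_i). *)

Section PointwiseDerivatives.
Variables (R : realType) (V W : normedModType R).

Lemma is_derive_affine (f : V -> R) (x v : V) (c : R) :
  (forall h : R, f (h *: v + x) = f x + h * c) -> is_derive x v f c.
Proof.
move=> f_affine.
have slope : \forall h \near dnbhs (0 : R),
    h^-1 *: ((f \o shift x) (h *: v) - f x) = c.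
  near=> h.
  have h_neq0 : h != 0 by near: h; exact: nbhs_dnbhs_neq.
  by rewrite /= f_affine addrC addKr /GRing.scale /= mulrA mulVf // mul1r.
apply: DeriveDef; first exact: is_cvg_near_cst slope.
exact: cvg_lim (cvg_near_cst _ slope).
Unshelve. all: by end_near.
Qed.

Lemma is_derive_sqr (f : V -> R) (x v : V) (df : R) : is_derive x v f df ->
  is_derive x v (fun u => f u ^+ 2) (2 * f x * df).
Proof.
move=> /(is_deriveX 2); rewrite expr1.
by have -> : f ^+ 2 = (fun u => f u ^+ 2) by apply/funext => u; rewrite exprfctE.
Qed.

Lemma is_derive_sumr n (f : 'I_n -> V -> W) (x v : V) (df : 'I_n -> W) :
  (forall i, is_derive x v (f i) (df i)) ->
  is_derive x v (fun u => \sum_(i < n) f i u) (\sum_(i < n) df i).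
Proof.
move=> /is_derive_sum.
by have -> : \sum_(i < n) f i = (fun u => \sum_(i < n) f i u)
  by apply/funext => u; rewrite fct_sumE.
Qed.

Lemma is_derive_mulrl (k : R) (f : V -> R) (x v : V) (df : R) :
  is_derive x v f df -> is_derive x v (fun u => k * f u) (k * df).
Proof. exact: is_deriveZ. Qed.

Lemma is_derive_subrc (f : V -> W) (c : W) (x v : V) (df : W) :
  is_derive x v f df -> is_derive x v (fun u => f u - c) df.
Proof. by move=> /is_deriveB /(_ (is_derive_cst c x v)); rewrite subr0. Qed.

End PointwiseDerivatives.

Section ColumnProjections.
Variables (R : realType) (d m : nat).
Implicit Types (x : 'rV[R]_d) (U V : 'M[R]_(d, m)).

Lemma xuDZ x (c : R) U V i : xu x (c *: U + V) i = c * xu x U i + xu x V i.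
Proof.
rewrite /xu mulr_sumr -big_split /=; apply: eq_bigr => k _.
by rewrite !mxE; ring.
Qed.

Lemma is_derive_xu x U V i : is_derive U V (fun W => xu x W i) (xu x V i).
Proof. by apply: is_derive_affine => h; rewrite xuDZ addrC. Qed.

Lemma xu_delta_mx x (k : 'I_d) (l i : 'I_m) : xu x (delta_mx k l) i = (i == l)%:R * x 0 k.
Proof.
rewrite /xu (bigD1 k) //= big1 => [|k' /negbTE k'_neq]; last first.
  by rewrite mxE k'_neq mulr0.
by rewrite mxE eqxx addr0 mulrC.
Qed.

End ColumnProjections.

Section LossGradient.
Variables (R : realType) (n d m : nat) (X : 'I_n -> 'rV[R]_d) (y : 'I_n -> R).
Implicit Types (U V : 'M[R]_(d, m)).

Lemma derive_loss U V : 'D_V (loss X y) U =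
  2 / (Num.sqrt m%:R * d%:R * n%:R) *
  \sum_(j < n) resid X y U j * \sum_(i < m) xu (X j) U i * xu (X j) V i.
Proof.
have dloss : is_derive U V (loss X y) ((2 * n%:R)^-1 * \sum_(j < n)
    2 * resid X y U j * ((Num.sqrt m%:R * d%:R)^-1 *
      \sum_(i < m) 2 * xu (X j) U i * xu (X j) V i)).
  apply: is_derive_mulrl; apply: is_derive_sumr => j; apply: is_derive_sqr.
  apply: is_derive_subrc; apply: is_derive_mulrl.
  by apply: is_derive_sumr => i; apply: is_derive_sqr; apply: is_derive_xu.
rewrite derive_val !mulr_sumr; apply: eq_bigr => j _.
under eq_bigr => i _ do rewrite -mulrA.
have halve2 (x : R) : (2 * x)^-1 * 2 = x^-1.
  by rewrite invfM mulrAC mulVf ?pnatr_eq0 // mul1r.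
by rewrite -mulr_sumr !mulrA halve2 !invfM; ring.
Qed.

Lemma grad_lossE U k l : grad (loss X y) U k l =
  2 / (Num.sqrt m%:R * d%:R * n%:R) *
  \sum_(j < n) resid X y U j * xu (X j) U l * X j 0 k.
Proof.
rewrite /grad mxE derive_loss; congr (_ * _); apply: eq_bigr => j _.
rewrite (bigD1 l) //= big1 => [|i /negbTE i_neq]; last first.
  by rewrite xu_delta_mx i_neq mul0r mulr0.
by rewrite xu_delta_mx eqxx mul1r addr0 mulrA.
Qed.

Hypothesis X_orth : forall i j : 'I_n, i != j -> \sum_(k < d) X i 0 k * X j 0 k = 0.

Lemma xu_grad_loss U i l : xu (X i) (grad (loss X y) U) l =
  2 / (Num.sqrt m%:R * d%:R * n%:R) * sqnorm (X i) * resid X y U i * xu (X i) U l.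
Proof.
rewrite {1}/xu; under eq_bigr => k _ do rewrite grad_lossE mulrCA mulr_sumr.
rewrite -mulr_sumr exchange_big (bigD1 i) //= [X in _ + X]big1 => [|j j_neq]; last first.
  rewrite (eq_bigr (fun k => resid X y U j * xu (X j) U l * (X i 0 k * X j 0 k)));
    last by move=> k _; ring.
  by rewrite -mulr_sumr X_orth ?mulr0 // eq_sym.
have -> : \sum_(k < d) X i 0 k * (resid X y U i * xu (X i) U l * X i 0 k) =
    sqnorm (X i) * (resid X y U i * xu (X i) U l).
  by rewrite /sqnorm mulr_suml; apply: eq_bigr => k _; ring.
by rewrite addr0; ring.
Qed.

Lemma xu_gd_step (eta : R) U i l :
  xu (X i) (U - eta *: grad (loss X y) U) l =
  (1 - 2 * eta * sqnorm (X i) * resid X y U i / (Num.sqrt m%:R * d%:R * n%:R)) *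
  xu (X i) U l.
Proof. rewrite addrC -scaleNr xuDZ xu_grad_loss; ring. Qed.

Lemma resid_gd_step (eta : R) U i :
  resid X y (U - eta *: grad (loss X y) U) i = (resid X y U i + y i) *
  (1 - 2 * eta * sqnorm (X i) * resid X y U i / (Num.sqrt m%:R * d%:R * n%:R)) ^+ 2
  - y i.
Proof.
rewrite {1}/resid; under eq_bigr => l _ do rewrite xu_gd_step exprMn.
by rewrite -mulr_sumr /resid; ring.
Qed.

End LossGradient.

Theorem theorem4 (R : realType) (n d m : nat) (X : 'I_n -> 'rV[R]_d) (y : 'I_n -> R)
  (eta : R) (U : nat -> 'M[R]_(d, m)) :
  (0 < m)%N ->
  (forall i j : 'I_n, i != j -> \sum_(k < d) X i 0 k * X j 0 k = 0) ->
  0 < eta ->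
  (forall t, U t.+1 = U t - eta *: grad (loss X y) (U t)) ->
  let z t i := 2 * eta * sqnorm (X i) * resid X y (U t) i
               / (Num.sqrt m%:R * d%:R * n%:R) in
  let a i := 2 * eta * sqnorm (X i) * y i / (Num.sqrt m%:R * d%:R * n%:R) in
  forall (t : nat) (i : 'I_n), z t.+1 i = fa (a i) (z t i).
Proof.
move=> _ X_orth _ gd_step z a t i.
by rewrite /z /a /fa gd_step resid_gd_step //; ring.
Qed.
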